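(* Let $c=(c_0,c_1):[\omega_1]^2\to 3\times[\omega_1]^{<\omega}$ be a $T$-coloring and let $\alpha_0<\alpha_1<\alpha_2<\alpha_3<\beta_0<\beta_1<\beta_2<\beta_3<\omega_1$ satisfy: (1) $\{\alpha_1,\alpha_2\},\{\beta_1,\beta_2\}\in\mathcal{B}_c$; (2) $\{\alpha_2,\beta_1\}\in\mathcal{A}_c$; (3) $c(\{\alpha_1,\beta_2\})=(2,\emptyset)$; (4) $c(\{\alpha_1,\alpha_3\})=c(\{\alpha_0,\alpha_2\})=(2,\emptyset)$; (5) $c(\{\beta_1,\beta_3\})=c(\{\beta_0,\beta_2\})=(2,\emptyset)$; (6) $\alpha_1\notin c_1(\{\alpha_2,\beta_2\})$. Then $\|\mathfrak{1}_{\{\alpha_1,\alpha_2\}}\|_{\mathcal{A}_c}=\|\mathfrak{1}_{\{\beta_1,\beta_2\}}\|_{\mathcal{A}_c}=1$, $\nu_{\mathcal{D}_c}(\mathfrak{1}_{\{\alpha_1,\alpha_2\}})=\nu_{\mathcal{D}_c}(\mathfrak{1}_{\{\beta_1,\beta_2\}})=\sqrt2$, $\|\mathfrak{1}_{\{\alpha_1,\alpha_2\}}-\mathfrak{1}_{\{\beta_1,\beta_2\}}\|_{\mathcal{A}_c}=\sqrt2$ and $\nu_{\mathcal{D}_c}(\mathfrak{1}_{\{\alpha_1,\alpha_2\}}-\mathfrak{1}_{\{\beta_1,\beta_2\}})=\sqrt5$.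
   Context: $3=\{0,1,2\}$; $[\omega_1]^{<\omega}$ is the family of finite subsets of $\omega_1$ and $[X]^2$ the family of two-element subsets; $\mathfrak{1}_A$ is the characteristic function of $A$. A function $c=(c_0,c_1):[\omega_1]^2\to I\times J$ (with $0,1\in I$, $J\neq\emptyset$) is a $T$-coloring if for every uncountable pairwise disjoint family $\{\{a_\xi(0),a_\xi(1)\}:\xi<\omega_1\}$ of pairs of $\omega_1$ and all $(i_0,j_0),(i_1,j_1)\in I\times J$ there are $\xi<\eta<\omega_1$ with $c(\{a_\xi(0),a_\eta(0)\})=(i_0,j_0)$ and $c(\{a_\xi(1),a_\eta(1)\})=(i_1,j_1)$. Define $\mathcal{A}_c=\{a\in[\omega_1]^{<\omega}:c_0[[a]^2]\subseteq\{0\}\}$, $\mathcal{B}_c=\{a\in[\omega_1]^{<\omega}:c_0[[a]^2]\subseteq\{1\}\}$, and $\mathcal{D}_c$ as the collection of all sets $\{\{\xi_1,\eta_1\},\dots,\{\xi_k,\eta_k\}\}$ ($k\in\mathbb{N}$) of consecutive pairs with $\xi_i<\eta_i$ such that $c(\{\xi_i,\xi_j\})=c(\{\eta_i,\eta_j\})=(2,\{\xi_l,\eta_l:l<i\})$ for all $1\le i<j\le k$ (a set of consecutive pairs is a set $D$ of two-element subsets with $\max a<\min b$ or $\max b<\min a$ for distinct $a,b\in D$). For $x\in\mathbb{R}^{\omega_1}$: $\|x\|_{\mathcal{A}_c}=\sup_{A\in\mathcal{A}_c}\sqrt{\sum_{\alpha\in A}x(\alpha)^2}$ and $\nu_{\mathcal{D}_c}(x)=\sup_{D\in\mathcal{D}_c}\sqrt{\sum_{\{\alpha,\beta\}\in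 D}|x(\alpha)-x(\beta)|^2}$. *)

From HB Require Import structures.
From mathcomp Require Import all_boot all_order all_algebra.
From mathcomp Require Import all_classical all_reals ereal numfun.
Set Implicit Arguments. Unset Strict Implicit. Unset Printing Implicit Defensive.
Import Order.TTheory GRing.Theory Num.Theory.
Local Open Scope classical_set_scope.
Local Open Scope ring_scope.
Local Open Scope order_scope.

Section Defs.
Context {disp : Order.disp_t} (W : orderType disp).

Definition is_omega1 : Prop :=
  well_founded (fun x y : W => x < y) /\
  ~ countable [set: W] /\
  (forall w : W, countable [set v : W | v < w]).

(* A coloring c = (c0, c1) : [W]^2 -> 3 x [W]^{<omega}, given as two
   functions of two arguments; it is a coloring of unordered pairs when
   it is symmetric with c0 valued in {0,1,2} and c1 valued in finite sets. *)
Definition is_coloring (c0 : W -> W -> nat) (c1 : W -> W -> set W) : Prop :=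
  (forall a b, c0 a b = c0 b a) /\ (forall a b, c1 a b = c1 b a) /\
  (forall a b, a != b -> (c0 a b < 3)%N) /\
  (forall a b, a != b -> finite_set (c1 a b)).

Definition T_coloring (c0 : W -> W -> nat) (c1 : W -> W -> set W) : Prop :=
  forall a0 a1 : W -> W,
    (forall xi, a0 xi < a1 xi) ->
    (forall xi eta, xi != eta ->
       [/\ a0 xi != a0 eta, a0 xi != a1 eta, a1 xi != a0 eta & a1 xi != a1 eta]) ->
    forall (i0 i1 : nat) (j0 j1 : set W),
      (i0 < 3)%N -> (i1 < 3)%N -> finite_set j0 -> finite_set j1 ->
      exists xi eta, [/\ xi < eta,
        c0 (a0 xi) (a0 eta) = i0, c1 (a0 xi) (a0 eta) = j0,
        c0 (a1 xi) (a1 eta) = i1 & c1 (a1 xi) (a1 eta) = j1].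

Definition A_c (c0 : W -> W -> nat) (a : set W) : Prop :=
  finite_set a /\ (forall x y, a x -> a y -> x != y -> c0 x y = 0%N).

Definition B_c (c0 : W -> W -> nat) (a : set W) : Prop :=
  finite_set a /\ (forall x y, a x -> a y -> x != y -> c0 x y = 1%N).

(* D_c: a set {{xi_1,eta_1},...,{xi_k,eta_k}} of consecutive pairs, listed
   in increasing order xi_1 < eta_1 < xi_2 < eta_2 < ... < xi_k < eta_k,
   represented by the sequence s of pairs (xi_i, eta_i). *)
Definition D_c (c0 : W -> W -> nat) (c1 : W -> W -> set W)
    (s : seq (W * W)) : Prop :=
  (forall p, p \in s -> p.1 < p.2) /\
  sorted (fun p q : W * W => p.2 < q.1) s /\
  (forall p : W * W, forall i j : nat, (i < j)%N -> (j < size s)%N ->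
     let lower := [set w : W | exists l : nat, (l < i)%N /\
                     (w = (nth p s l).1 \/ w = (nth p s l).2)] in
     [/\ c0 (nth p s i).1 (nth p s j).1 = 2%N,
         c1 (nth p s i).1 (nth p s j).1 = lower,
         c0 (nth p s i).2 (nth p s j).2 = 2%N &
         c1 (nth p s i).2 (nth p s j).2 = lower]).

Variable R : realType.

Definition normA (c0 : W -> W -> nat) (x : W -> R) : \bar R :=
  ereal_sup [set (Num.sqrt (\sum_(a \in A) x a ^+ 2))%:E | A in A_c c0].

Definition nuD (c0 : W -> W -> nat) (c1 : W -> W -> set W) (x : W -> R)
    : \bar R :=
  ereal_sup [set (Num.sqrt (\sum_(p <- s) `|x p.1 - x p.2| ^+ 2))%:E
            | s in D_c c0 c1].

End Defs.

From HB Require Import structures.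
From mathcomp Require Import all_boot all_order all_algebra.
From mathcomp Require Import all_classical all_reals ereal numfun.
From mathcomp Require Import lra.
Import Order.TTheory GRing.Theory Num.Theory.
Local Open Scope classical_set_scope.
Local Open Scope ring_scope.

(* Write x = 1_{a1,a2} and y = 1_{b1,b2}. As {a1,a2} and {b1,b2} are in B_c, a
   set in A_c contains at most one point of each; this gives the upper bounds for
   the A_c-norms, which {a1}, {b1} and {a2,b1} attain.
   The endpoints of the pairs of any D in D_c form a strictly increasing sequence,
   so each point is used at most once, and a pair on whose endpoints a function
   takes values of the same sign contributes at most the sum of their squares.
   This bounds nu_D(x)^2, nu_D(y)^2 by 2 and nu_D(x - y)^2 by 4, unless some pair
   of D runs from {a1,a2} to {b1,b2}. Such a pair contributes at most 4, the pairs
   below it can only meet a1 and those above it only b2. Both cannot happen: the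
   pair would then be {a2,b1}, and the D_c condition between it and the later pair
   through b2 would give c0{b1,b2} = 2 or a1 in c1{a2,b2}, against (1) or (6). *)

Lemma ereal_sup_eq_max (R : realType) (S : set \bar R) (r : R) :
  S r%:E -> ubound S r%:E -> ereal_sup S = r%:E.
Proof. by move=> Sr ubS; apply/le_anti; rewrite ge_ereal_sup // ereal_sup_ubound. Qed.

Lemma sqr_dist_le_sqrD {R : realDomainType} (a b : R) :
  0 <= a * b -> `|a - b| ^+ 2 <= a ^+ 2 + b ^+ 2.
Proof. by rewrite real_normK ?num_real // => ab; nra. Qed.

Lemma sqr_dist_le4 {R : realDomainType} (a b : R) :
  a ^+ 2 <= 1 -> b ^+ 2 <= 1 -> `|a - b| ^+ 2 <= 4.
Proof. by rewrite real_normK ?num_real // => a1 b1; nra. Qed.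

Section indicator_pair.
Context {T : choiceType} {R : realDomainType}.
Implicit Types (u v w : T) (A B : set T).

Lemma indic_pairE u v w : (\1_[set u; v] w : R) = ((w == u) || (w == v))%:R.
Proof. by rewrite indicE in_setU !in_set1. Qed.

Lemma indic_sqr A w : (\1_A w : R) ^+ 2 = \1_A w.
Proof. by rewrite indicE; case: (w \in A); rewrite ?expr1n ?expr0n. Qed.

Lemma indic_subr_sqr A B w : ~ (A w /\ B w) ->
  (\1_A w - \1_B w : R) ^+ 2 = \1_A w + \1_B w.
Proof.
rewrite !indicE => nAB.
case: (boolP (w \in A)) => [/set_mem Aw|_];
  case: (boolP (w \in B)) => [/set_mem Bw|_] //=.
- by exfalso; exact: nAB.
- by rewrite subr0 expr1n addr0.
- by rewrite sub0r sqrrN expr1n add0r.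
- by rewrite subr0 expr0n addr0.
Qed.

Lemma sum_pred1_uniq (t : seq T) u :
  uniq t -> \sum_(e <- t) ((e == u)%:R : R) = (u \in t)%:R.
Proof.
move=> t_uniq; rewrite -natr_sum -count_uniq_mem // -sum1_count.
by congr (_%:R); rewrite [X in _ = X]big_mkcond.
Qed.

Lemma sum_indic_pair (t : seq T) u v : u != v -> uniq t ->
  \sum_(e <- t) (\1_[set u; v] e : R) = (u \in t)%:R + (v \in t)%:R.
Proof.
move=> uv t_uniq; rewrite -!sum_pred1_uniq // -big_split /=.
apply: eq_bigr => e _; rewrite indic_pairE.
by case: eqP => [->|_]; rewrite ?(negbTE uv) ?add0r ?addr0.
Qed.

Lemma fsbig_indic_pair A u v : finite_set A -> u != v ->
  \sum_(e \in A) (\1_[set u; v] e : R) = (u \in A)%:R + (v \in A)%:R.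
Proof.
move=> finA uv; rewrite fsbig_finite // sum_indic_pair ?finmap.fset_uniq //.
by rewrite !in_fset_set.
Qed.

End indicator_pair.

Section pair_chains.
Context {disp : Order.disp_t} {W : orderType disp}.
Implicit Types (s : seq (W * W)) (p q : W * W).

Definition flat_pairs s : seq W := flatten [seq [:: p.1; p.2] | p <- s].

Lemma flat_pairs_cat s1 p s2 :
  flat_pairs (s1 ++ p :: s2) = flat_pairs s1 ++ p.1 :: p.2 :: flat_pairs s2.
Proof. by rewrite /flat_pairs map_cat flatten_cat. Qed.

Lemma mem_flat_pairs w s :
  (w \in flat_pairs s) = has (fun p => (w == p.1) || (w == p.2)) s.
Proof.
apply/flatten_mapP/hasP => -[p ps wp]; exists p => //;
  by move: wp; rewrite !inE.
Qed.

Lemma mem_flat_pairs_pair p s :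
  p \in s -> p.1 \in flat_pairs s /\ p.2 \in flat_pairs s.
Proof.
by move=> ps; rewrite !mem_flat_pairs; split; apply/hasP; exists p; rewrite ?eqxx ?orbT.
Qed.

Lemma big_flat_pairs (V : nmodType) (F : W -> V) s :
  \sum_(e <- flat_pairs s) F e = \sum_(p <- s) (F p.1 + F p.2).
Proof.
by rewrite big_flatten big_map; apply: eq_bigr => p _; rewrite big_cons big_seq1.
Qed.

Lemma path_flat_pairs p s : {in s, forall q, (q.1 < q.2)%O} ->
  path (fun p q => (p.2 < q.1)%O) p s -> path <%O p.2 (flat_pairs s).
Proof.
elim: s p => //= q s IHs p lt_s /andP[pq qs].
rewrite pq (lt_s q (mem_head _ _)) IHs // => r rs.
by apply: lt_s; rewrite in_cons rs orbT.
Qed.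

Lemma D_c_sorted_flat {c0 c1 s} : D_c c0 c1 s -> sorted <%O (flat_pairs s).
Proof.
case: s => // p s [lt_s [sorted_s _]] /=.
rewrite (lt_s p (mem_head _ _)) path_flat_pairs // => q qs.
by apply: lt_s; rewrite in_cons qs orbT.
Qed.

Lemma D_c_uniq_flat {c0 c1 s} : D_c c0 c1 s -> uniq (flat_pairs s).
Proof. by move/D_c_sorted_flat/lt_sorted_uniq. Qed.

Lemma D_c_cat_flat_lt {c0 c1 s1 p s2} : D_c c0 c1 (s1 ++ p :: s2) ->
  {in flat_pairs s1, forall e, (e < p.1)%O} /\ {in flat_pairs s2, forall e, (p.2 < e)%O}.
Proof.
move/D_c_sorted_flat; rewrite flat_pairs_cat lt_sorted_pairwise pairwise_cat.
case/and3P => /allrelP lt1 _ /= /andP[_ /andP[/allP lt2 _]].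
by split => e es; [exact: lt1 es (mem_head _ _) | exact: lt2].
Qed.

Lemma D_c_cat_color {c0 c1 s1 p s2 q} : D_c c0 c1 (s1 ++ p :: s2) -> q \in s2 ->
  let lower := [set` flat_pairs s1] in
  [/\ c0 p.1 q.1 = 2%N, c1 p.1 q.1 = lower, c0 p.2 q.2 = 2%N & c1 p.2 q.2 = lower].
Proof.
move=> [_ [_ Dc]] qs2 lower.
have i_lt_j : (size s1 < size s1 + (index q s2).+1)%N by rewrite addnS ltnS leq_addr.
have j_lt : (size s1 + (index q s2).+1 < size (s1 ++ p :: s2))%N.
  by rewrite size_cat ltn_add2l /= ltnS index_mem.
have nth_p : nth p (s1 ++ p :: s2) (size s1) = p by rewrite nth_cat ltnn subnn.
have nth_q : nth p (s1 ++ p :: s2) (size s1 + (index q s2).+1) = q.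
  by rewrite nth_cat ltnNge leq_addr /= addKn /= nth_index.
have lowerE : [set w | exists l, (l < size s1)%N /\
    (w = (nth p (s1 ++ p :: s2) l).1 \/ w = (nth p (s1 ++ p :: s2) l).2)] = lower.
  rewrite /lower; apply/seteqP; split => w /=.
    case=> l [ls wl]; rewrite mem_flat_pairs; apply/(has_nthP p); exists l => //.
    by rewrite nth_cat ls in wl; case: wl => ->; rewrite eqxx ?orbT.
  rewrite mem_flat_pairs => /(has_nthP p)[l ls /orP wl]; exists l; split => //.
  by rewrite nth_cat ls; case: wl => /eqP ->; [left | right].
by have /= := Dc p _ _ i_lt_j j_lt; rewrite nth_p nth_q lowerE.
Qed.

Lemma D_c_pair2 c0 c1 (u1 v1 u2 v2 : W) :
  (u1 < v1)%O -> (v1 < u2)%O -> (u2 < v2)%O ->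
  c0 u1 u2 = 2%N -> c1 u1 u2 = set0 -> c0 v1 v2 = 2%N -> c1 v1 v2 = set0 ->
  D_c c0 c1 [:: (u1, v1); (u2, v2)].
Proof.
move=> lt1 lt12 lt2 c0u c1u c0v c1v; split; last split.
- by move=> p; rewrite !inE => /orP[] /eqP ->.
- by rewrite /= lt12.
move=> d [|[|i]] [|[|[|j]]] //= _ _.
by rewrite c0u c1u c0v c1v; split => //; apply/seteqP; split => w // [l []].
Qed.

Lemma sum_sqr_dist_le {R : realDomainType} (f : W -> R) s :
  {in s, forall p, 0 <= f p.1 * f p.2} ->
  \sum_(p <- s) `|f p.1 - f p.2| ^+ 2 <= \sum_(e <- flat_pairs s) f e ^+ 2.
Proof.
move=> same_sign; rewrite big_flat_pairs big_seq [X in _ <= X]big_seq.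
by apply: ler_sum => p /same_sign /sqr_dist_le_sqrD.
Qed.

End pair_chains.

Section single_pair.
Context {disp : Order.disp_t} {W : orderType disp} {R : realType}.
Context {c0 : W -> W -> nat} {c1 : W -> W -> set W}.
Implicit Types (u v : W) (A : set W).

Lemma sum_indic_A_c_le1 A u v : A_c c0 A -> B_c c0 [set u; v] -> u != v ->
  \sum_(e \in A) (\1_[set u; v] e : R) <= 1.
Proof.
move=> [finA A0] [_ B1] uv; rewrite fsbig_indic_pair //.
have c0uv : c0 u v = 1%N by apply: B1; [left | right |].
have not_both : ~~ ((u \in A) && (v \in A)).
  by apply/andP => -[/set_mem Au /set_mem Av]; move: (A0 u v Au Av uv); rewrite c0uv.
by move: not_both; case: (u \in A); case: (v \in A); rewrite /= ?addr0 ?add0r ?ler01.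
Qed.

Lemma normA_indic_pair u v : u != v -> B_c c0 [set u; v] ->
  normA c0 (\1_[set u; v] : W -> R) = 1%:E.
Proof.
move=> uv Buv; apply: ereal_sup_eq_max.
  exists [set u]; first by split => [|x y -> ->]; rewrite ?eqxx.
  by rewrite fsbig_set1 indic_pairE eqxx expr1n sqrtr1.
move=> _ [A A_A <-]; rewrite lee_fin -sqrtr1 ler_wsqrtr //.
under eq_fsbigr do rewrite indic_sqr.
exact: sum_indic_A_c_le1.
Qed.

Lemma nuD_indic_pair {u0 u v v1} : (u0 < u)%O -> (u < v)%O -> (v < v1)%O ->
  c0 u0 v = 2%N -> c1 u0 v = set0 -> c0 u v1 = 2%N -> c1 u v1 = set0 ->
  nuD c0 c1 (\1_[set u; v] : W -> R) = (Num.sqrt 2)%:E.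
Proof.
move=> u0u uv vv1 c0u c1u c0v c1v; apply: ereal_sup_eq_max.
  exists [:: (u0, u); (v, v1)]; first exact: D_c_pair2.
  rewrite !big_cons big_nil /= !indic_pairE eqxx (lt_eqF u0u) (lt_eqF (lt_trans u0u uv)).
  rewrite (gt_eqF uv) (gt_eqF vv1) (gt_eqF (lt_trans uv vv1)) eqxx orbT /=.
  by rewrite sub0r normrN subr0 normr1 expr1n addr0.
move=> _ [s Ds <-]; rewrite lee_fin ler_wsqrtr //.
have s_uniq := D_c_uniq_flat Ds.
apply: le_trans (sum_sqr_dist_le _ _ _) _ => [p _|].
  by rewrite !indicE mulr_ge0.
under eq_bigr do rewrite indic_sqr.
rewrite sum_indic_pair ?lt_eqF //.
by case: (u \in _); case: (v \in _); rewrite /=; lra.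
Qed.

End single_pair.

Section indicator_difference.
Context {disp : Order.disp_t} {W : orderType disp} {R : realType}.
Context {c0 : W -> W -> nat} {c1 : W -> W -> set W} {a1 a2 b1 b2 : W}.
Hypotheses (a12 : (a1 < a2)%O) (a2b1 : (a2 < b1)%O) (b12 : (b1 < b2)%O).

Local Notation f := (\1_[set a1; a2] - \1_[set b1; b2] : W -> R).

Let a1b1 : (a1 < b1)%O. Proof. exact: lt_trans a12 a2b1. Qed.
Let a2b2 : (a2 < b2)%O. Proof. exact: lt_trans a2b1 b12. Qed.
Let a1b2 : (a1 < b2)%O. Proof. exact: lt_trans a1b1 b12. Qed.

Lemma diffE e :
  f e = ((e == a1) || (e == a2))%:R - ((e == b1) || (e == b2))%:R.
Proof. by rewrite !fctE !indic_pairE. Qed.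

Lemma diff_sqr e : f e ^+ 2 = \1_[set a1; a2] e + \1_[set b1; b2] e.
Proof.
rewrite !fctE; apply: indic_subr_sqr => -[[]-> []] /eqP.
all: by rewrite ?(lt_eqF a1b1) ?(lt_eqF a1b2) ?(lt_eqF a2b1) ?(lt_eqF a2b2).
Qed.

Lemma sum_diff_sqr (t : seq W) : uniq t -> \sum_(e <- t) f e ^+ 2 =
  (a1 \in t)%:R + (a2 \in t)%:R + ((b1 \in t)%:R + (b2 \in t)%:R).
Proof.
move=> t_uniq; under eq_bigr do rewrite diff_sqr.
by rewrite big_split /= !sum_indic_pair ?lt_eqF.
Qed.

Lemma diff_ge0 e : (e < b1)%O -> 0 <= f e.
Proof.
move=> eb1; rewrite diffE (lt_eqF eb1) (lt_eqF (lt_trans eb1 b12)) subr0.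
exact: ler0n.
Qed.

Lemma diff_le0 e : (a2 < e)%O -> f e <= 0.
Proof.
move=> a2e; rewrite diffE (gt_eqF a2e) (gt_eqF (lt_trans a12 a2e)) sub0r.
by rewrite oppr_le0 ler0n.
Qed.

Lemma diff_neq0 e : f e != 0 -> e \in [:: a1; a2; b1; b2].
Proof.
rewrite diffE !inE.
by case: (e == a1); case: (e == a2); case: (e == b1); case: (e == b2);
  rewrite //= subrr eqxx.
Qed.

Lemma normA_diff : B_c c0 [set a1; a2] -> B_c c0 [set b1; b2] ->
  A_c c0 [set a2; b1] -> normA c0 f = (Num.sqrt 2)%:E.
Proof.
move=> Ba Bb Aab; apply: ereal_sup_eq_max.
  exists [set a2; b1] => //.
  under eq_fsbigr do rewrite diff_sqr.
  rewrite fsbig_split ?finite_setU // !fsbig_indic_pair ?lt_eqF //.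
  rewrite !in_setU !in_set1 !eqxx (lt_eqF a12) (lt_eqF a1b1).
  by rewrite (gt_eqF a2b1) (gt_eqF a2b2) (gt_eqF b12) /= add0r addr0.
move=> _ [A A_A <-]; rewrite lee_fin ler_wsqrtr //.
under eq_fsbigr do rewrite diff_sqr.
rewrite fsbig_split; last by case: A_A.
rewrite -[2]/(1 + 1); apply: lerD;
  by apply: (sum_indic_A_c_le1 (c0 := c0)) => //; rewrite lt_eqF.
Qed.

Lemma diff_sqr_le1 e : f e ^+ 2 <= 1.
Proof.
rewrite diffE; case: (_ || _); case: (_ || _);
  by rewrite ?subrr ?subr0 ?sub0r ?sqrrN ?expr1n ?expr0n ?ler01.
Qed.

Lemma straddle_bounds {p} : (p.1 < p.2)%O -> f p.1 * f p.2 < 0 ->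
  (p.1 <= a2)%O /\ (b1 <= p.2)%O.
Proof.
move=> lt_p neg; split; rewrite leNgt; apply: contraTN neg => lt_e; rewrite -leNgt.
- by rewrite mulr_le0 // diff_le0 // (lt_trans lt_e lt_p).
- by rewrite mulr_ge0 // diff_ge0 // (lt_trans lt_p lt_e).
Qed.

Lemma sum_dist_below {t : seq (W * W)} : uniq (flat_pairs t) ->
  {in flat_pairs t, forall e, (e < a2)%O} ->
  \sum_(p <- t) `|f p.1 - f p.2| ^+ 2 <= (a1 \in flat_pairs t)%:R.
Proof.
move=> t_uniq below.
apply: le_trans (sum_sqr_dist_le _ _ _) _ => [p /mem_flat_pairs_pair[p1 p2]|].
  by rewrite mulr_ge0 // diff_ge0 // (lt_trans _ a2b1) // below.
have notin e : (a2 <= e)%O -> (e \in flat_pairs t) = false.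
  by move=> a2e; apply/negP => /below; rewrite ltNge a2e.
rewrite sum_diff_sqr // (notin a2) ?(notin b1) ?(notin b2) ?(ltW a2b1) ?(ltW a2b2) //=.
by rewrite !addr0.
Qed.

Lemma sum_dist_above {t : seq (W * W)} : uniq (flat_pairs t) ->
  {in flat_pairs t, forall e, (b1 < e)%O} ->
  \sum_(p <- t) `|f p.1 - f p.2| ^+ 2 <= (b2 \in flat_pairs t)%:R.
Proof.
move=> t_uniq above.
apply: le_trans (sum_sqr_dist_le _ _ _) _ => [p /mem_flat_pairs_pair[p1 p2]|].
  by rewrite mulr_le0 // diff_le0 // (lt_trans a2b1) // above.
have notin e : (e <= b1)%O -> (e \in flat_pairs t) = false.
  by move=> eb1; apply/negP => /above; rewrite ltNge eb1.
rewrite sum_diff_sqr // (notin b1) ?(notin a1) ?(notin a2) ?(ltW a1b1) ?(ltW a2b1) //=.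
by rewrite !add0r.
Qed.

Lemma straddle_not_both {s1 p s2} : D_c c0 c1 (s1 ++ p :: s2) ->
  c0 b1 b2 = 1%N -> ~ c1 a2 b2 a1 -> f p.1 * f p.2 < 0 ->
  a1 \in flat_pairs s1 -> b2 \in flat_pairs s2 -> False.
Proof.
move=> Ds c0b nc neg a1s1 b2s2.
have [lt1 lt2] := D_c_cat_flat_lt Ds.
have p_lt : (p.1 < p.2)%O by apply: Ds.1; rewrite mem_cat mem_head orbT.
have [pa2 b1p] := straddle_bounds p_lt neg.
have supp_p : p.1 \in [:: a1; a2; b1; b2] /\ p.2 \in [:: a1; a2; b1; b2].
  by split; apply: diff_neq0; apply: contraTneq neg => ->; rewrite ?mul0r ?mulr0 ltxx.
have p1E : p.1 = a2.
  case: supp_p => + _; rewrite !inE => /or4P[] /eqP p1 //;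
    [move: (lt1 _ a1s1) | move: pa2 | move: pa2];
    by rewrite p1 ?ltxx // leNgt ?a2b1 ?a2b2.
have p2E : p.2 = b1.
  case: supp_p => _; rewrite !inE => /or4P[] /eqP p2 //;
    [move: b1p | move: b1p | move: (lt2 _ b2s2)];
    by rewrite p2 ?ltxx // leNgt ?a1b1 ?a2b1.
move: b2s2; rewrite mem_flat_pairs => /hasP[q qs2 /orP[] /eqP b2q].
  have [_ c1E _ _] := D_c_cat_color Ds qs2.
  by apply: nc; rewrite b2q -p1E c1E.
have [_ _ c0E _] := D_c_cat_color Ds qs2.
by rewrite p2E -b2q c0b in c0E.
Qed.

Lemma sum_dist_straddle_le5 s1 p s2 : D_c c0 c1 (s1 ++ p :: s2) ->
  c0 b1 b2 = 1%N -> ~ c1 a2 b2 a1 -> f p.1 * f p.2 < 0 ->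
  \sum_(q <- s1 ++ p :: s2) `|f q.1 - f q.2| ^+ 2 <= 5.
Proof.
move=> Ds c0b nc neg.
have [lt1 lt2] := D_c_cat_flat_lt Ds.
have p_lt : (p.1 < p.2)%O by apply: Ds.1; rewrite mem_cat mem_head orbT.
have [pa2 b1p] := straddle_bounds p_lt neg.
move: (D_c_uniq_flat Ds); rewrite flat_pairs_cat cat_uniq /=.
case/and3P => u1 _ /and3P[_ _ u2].
have S1 := sum_dist_below u1 (fun e es => lt_le_trans (lt1 e es) pa2).
have S2 := sum_dist_above u2 (fun e es => le_lt_trans b1p (lt2 e es)).
have Sp := sqr_dist_le4 _ _ (diff_sqr_le1 p.1) (diff_sqr_le1 p.2).
have := straddle_not_both Ds c0b nc neg.
rewrite big_cat big_cons /=; move: S1 S2.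
by case: (a1 \in _); case: (b2 \in _) => /= S1 S2 not_both;
  [exfalso; exact: not_both | lra..].
Qed.

Lemma sum_dist_diff_le5 s : D_c c0 c1 s -> c0 b1 b2 = 1%N -> ~ c1 a2 b2 a1 ->
  \sum_(p <- s) `|f p.1 - f p.2| ^+ 2 <= 5.
Proof.
move=> Ds c0b nc.
have [/hasP[p ps neg] | /hasPn same_sign] := boolP (has (fun p => f p.1 * f p.2 < 0) s).
  by move: Ds; case/splitPr: ps => s1 s2 Ds; apply: sum_dist_straddle_le5.
apply: le_trans (sum_sqr_dist_le _ _ _) _ => [p /same_sign|]; first by rewrite leNgt.
rewrite sum_diff_sqr ?(D_c_uniq_flat Ds) //.
by do 4 case: (_ \in _); rewrite /=; lra.
Qed.

Lemma nuD_diff {b3} : (b2 < b3)%O -> B_c c0 [set b1; b2] -> ~ c1 a2 b2 a1 ->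
  c0 a1 b2 = 2%N -> c1 a1 b2 = set0 -> c0 b1 b3 = 2%N -> c1 b1 b3 = set0 ->
  nuD c0 c1 f = (Num.sqrt 5)%:E.
Proof.
move=> b23 [_ Bb] nc c0a c1a c0b3 c1b3.
have c0b : c0 b1 b2 = 1%N by apply: Bb; [left | right | rewrite lt_eqF].
apply: ereal_sup_eq_max.
  exists [:: (a1, b1); (b2, b3)]; first exact: D_c_pair2.
  have b1b3 := lt_trans b12 b23; have a2b3 := lt_trans a2b2 b23.
  have a1b3 := lt_trans a1b2 b23.
  rewrite !big_cons big_nil /= !diffE !eqxx (lt_eqF a1b1) (lt_eqF a1b2) (lt_eqF a12).
  rewrite (gt_eqF a1b1) (gt_eqF a2b1) (gt_eqF b12) (gt_eqF a2b2) (gt_eqF a1b2).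
  rewrite (gt_eqF b23) (gt_eqF b1b3) (gt_eqF a2b3) (gt_eqF a1b3) /=.
  by congr (_%:E); congr Num.sqrt; rewrite !real_normK ?num_real //; nra.
by move=> _ [s Ds <-]; rewrite lee_fin ler_wsqrtr // sum_dist_diff_le5.
Qed.

End indicator_difference.

Theorem lemma3p3 (disp : Order.disp_t) (W : orderType disp) (R : realType)
  (c0 : W -> W -> nat) (c1 : W -> W -> set W)
  (a0 a1 a2 a3 b0 b1 b2 b3 : W) :
  is_omega1 W ->
  is_coloring c0 c1 -> T_coloring c0 c1 ->
  (a0 < a1)%O -> (a1 < a2)%O -> (a2 < a3)%O -> (a3 < b0)%O ->
  (b0 < b1)%O -> (b1 < b2)%O -> (b2 < b3)%O ->
  B_c c0 [set a1; a2] -> B_c c0 [set b1; b2] ->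
  A_c c0 [set a2; b1] ->
  (c0 a1 b2 = 2%N /\ c1 a1 b2 = set0) ->
  (c0 a1 a3 = 2%N /\ c1 a1 a3 = set0) -> (c0 a0 a2 = 2%N /\ c1 a0 a2 = set0) ->
  (c0 b1 b3 = 2%N /\ c1 b1 b3 = set0) -> (c0 b0 b2 = 2%N /\ c1 b0 b2 = set0) ->
  ~ c1 a2 b2 a1 ->
  normA c0 (\1_[set a1; a2] : W -> R) = 1%:E /\
      normA c0 (\1_[set b1; b2] : W -> R) = 1%:E /\
      nuD c0 c1 (\1_[set a1; a2] : W -> R) = (Num.sqrt 2)%:E /\
      nuD c0 c1 (\1_[set b1; b2] : W -> R) = (Num.sqrt 2)%:E /\
      normA c0 (\1_[set a1; a2] - \1_[set b1; b2] : W -> R) = (Num.sqrt 2)%:E /\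
    nuD c0 c1 (\1_[set a1; a2] - \1_[set b1; b2] : W -> R) = (Num.sqrt 5)%:E.
Proof.
move=> _ _ _ a01 a12 a23 a3b0 b01 b12 b23 Ba Bb Aab [c0ab c1ab] [c0a13 c1a13]
  [c0a02 c1a02] [c0b13 c1b13] [c0b02 c1b02] nc.
have a2b1 : (a2 < b1)%O by apply: lt_trans a23 (lt_trans a3b0 b01).
split; first by apply: normA_indic_pair; rewrite ?lt_eqF.
split; first by apply: normA_indic_pair; rewrite ?lt_eqF.
split; first exact: nuD_indic_pair a01 a12 a23 c0a02 c1a02 c0a13 c1a13.
split; first exact: nuD_indic_pair b01 b12 b23 c0b02 c1b02 c0b13 c1b13.
split; first exact: normA_diff a12 a2b1 b12 Ba Bb Aab.
exact: (nuD_diff (R := R) a12 a2b1 b12 b23 Bb nc c0ab c1ab c0b13 c1b13).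
Qed.
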